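(* In the setting of the context, assume the matrix representing $A$ with respect to the fixed feasible basis has constant row sum $\theta_r$ (i.e. $c_i+a_i+b_i=\theta_r$ for $0\le i\le d$), where $\theta_r$ is an eigenvalue of $A$. Let $s\in\{0,\dots,d\}$ with $s\ne r$. The following are equivalent: (i) in $\Delta$, vertex $r$ is adjacent to vertex $s$ and to no other vertex; (ii) $a^*_r\ne\theta^*_0$ and $$u_i(\theta_s)=\frac{\theta^*_i-a^*_r}{\theta^*_0-a^*_r}\qquad(0\le i\le d).$$
   Context: Let $\mathbb F$ be a field, $d\ge1$, $V$ an $\mathbb F$-vector space of dimension $d+1$, $\mathcal A=\mathrm{End}(V)$ with identity $I$. Let $E^*_0,\dots,E^*_d\in\mathcal A$ satisfy $E^*_iE^*_j=\delta_{i,j}E^*_i$, $\mathrm{rank}(E^*_i)=1$. Let $A\in\mathcal A$ satisfy $E^*_iAE^*_j=0$ if $|i-j|>1$ and $\neq0$ if $|i-j|=1$. Assume $A$ has $d+1$ distinct eigenvalues $\theta_0,\dots,\theta_d\in\mathbb F$ with primitive idempotents $E_i=\prod_{j\ne i}\frac{A-\theta_jI}{\theta_i-\theta_j}$. Let $\theta^*_i\in\mathbb F$, $A^*=\sum_i\theta^*_iE^*_i$, $a^*_i=\mathrm{tr}(E_iA^* )$. Let $\Delta$ be the graph on $\{0,\dots,d\}$ with $i\sim j$ iff $i\ne j$ and $E_iA^*E_j\ne0$. A basis $v_0,\dots,v_d$ of $V$ is feasible if $v_i\in E^*_iV$ for all $i$; fix one. Then $Av_i=b_{i-1}v_{i-1}+a_iv_i+c_{i+1}v_{i+1}$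 ($v_{-1}=v_{d+1}=0$), with $a_i=\mathrm{tr}(E^*_iA)$, nonzero $b_0,\dots,b_{d-1}$, $c_1,\dots,c_d$, and $b_d=c_0=0$. Define $u_0,\dots,u_{d+1}\in\mathbb F[\lambda]$ by $u_{-1}=0$, $u_0=1$, $\lambda u_i=c_iu_{i-1}+a_iu_i+b_iu_{i+1}$ $(0\le i\le d-1)$, $\lambda u_d=c_du_{d-1}+a_du_d+u_{d+1}/(b_0\cdots b_{d-1})$. *)

From HB Require Import structures.
From mathcomp Require Import all_boot all_order all_algebra.
Set Implicit Arguments. Unset Strict Implicit. Unset Printing Implicit Defensive.
Import Order.TTheory GRing.Theory Num.Theory.
Local Open Scope ring_scope.

(* V = column vectors 'cV[F]_(d.+1), End(V) = 'M[F]_(d.+1).  Scalar sequences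
   and families indexed 0..d are given as functions on nat (values outside
   0..d are irrelevant). *)

Definition primIdem (F : fieldType) (d : nat) (A : 'M[F]_d.+1) (theta : nat -> F)
  (i : nat) : 'M[F]_d.+1 :=
  \prod_(j < d.+1 | (j : nat) != i) ((theta i - theta j)^-1 *: (A - (theta j)%:M)).

Definition dualA (F : fieldType) (d : nat) (Es : nat -> 'M[F]_d.+1) (thst : nat -> F)
  : 'M[F]_d.+1 := \sum_(i < d.+1) thst i *: Es i.

Definition astar (F : fieldType) (d : nat) (A : 'M[F]_d.+1) (theta : nat -> F)
  (Es : nat -> 'M[F]_d.+1) (thst : nat -> F) (i : nat) : F :=
  \tr (primIdem A theta i *m dualA Es thst).

Definition DeltaAdj (F : fieldType) (d : nat) (A : 'M[F]_d.+1) (theta : nat -> F)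
  (Es : nat -> 'M[F]_d.+1) (thst : nat -> F) (i j : nat) : Prop :=
  i <> j /\ primIdem A theta i *m dualA Es thst *m primIdem A theta j <> 0.

(* (u_n, u_{n+1}) for the recurrence u_{-1} = 0, u_0 = 1,
   lambda u_i = c_i u_{i-1} + a_i u_i + b_i u_{i+1}  (used for 0 <= i <= d-1). *)
Fixpoint u_aux (F : fieldType) (a b c : nat -> F) (n : nat) : {poly F} * {poly F} :=
  match n with
  | 0 => (1, (b 0)^-1 *: ('X - (a 0)%:P))
  | m.+1 => let: (p, q) := u_aux a b c m in
            (q, (b m.+1)^-1 *: (('X - (a m.+1)%:P) * q - c m.+1 *: p))
  end.

Definition upoly (F : fieldType) (a b c : nat -> F) (n : nat) : {poly F} :=
  (u_aux a b c n).1.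

From HB Require Import structures.
From mathcomp Require Import all_boot all_order all_algebra.
From mathcomp Require Import zify ring.
Import Order.TTheory GRing.Theory Num.Theory.
Set Implicit Arguments. Unset Strict Implicit. Unset Printing Implicit Defensive.
Local Open Scope ring_scope.

(* Proposition 8.3.  Let P be the matrix of the feasible basis.  In these
   coordinates E^*_i is the coordinate projection delta_ii, A is the tridiagonal
   matrix M = tridiag(a, b, c) and A^* is D = diag(theta^*_i).  As the b_i are
   nonzero, an eigenvector of M is determined by its first entry through the
   u_i, so U = (u_i(theta_j)) is an invertible eigenvector matrix of M.  In the
   eigenbasis W = P U of A each E_i is again delta_ii and A^* has matrix
   N = U^-1 D U, so that i ~ j in Delta iff N_ij <> 0, and a^*_i = N_ii.  The
   constant row sum makes column r of U all ones, whence
   theta^*_i = sum_k U_ik N_kr, and a diagonal symmetrizer of M makes the zero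
   pattern of N symmetric.  The theorem thus becomes a statement about column r
   of N, proved using the invertibility of U (column_criterion). *)

Lemma sum_ord_pick (V : zmodType) (n m : nat) (G : nat -> V) :
  \sum_(k < n) (if (k : nat) == m then G k else 0) = if (m < n)%N then G m else 0.
Proof.
case: ltnP => [hm | hm].
  by rewrite -big_mkcond (big_pred1 (Ordinal hm)) // => k; rewrite -val_eqE.
by rewrite big1 // => k _; case: eqP => // ek; move: (ltn_ord k); rewrite ek ltnNge hm.
Qed.

Section MatrixFacts.
Variable F : fieldType.

Lemma mulmx_eigvec_cols n (X W : 'M[F]_n) (e : 'rV[F]_n) :
  (forall j, X *m col j W = e 0 j *: col j W) <-> X *m W = W *m diag_mx e.
Proof.
split=> [H | H j].
  apply/matrixP => i j; have := congr1 (fun y : 'cV_n => y i 0) (H j).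
  rewrite mul_mx_diag !mxE mulrC => <-; apply: eq_bigr => k _; by rewrite !mxE.
apply/matrixP => i k; have := congr1 (fun Y : 'M_n => Y i j) H.
by rewrite mul_mx_diag !mxE mulrC => <-; apply: eq_bigr => l _; rewrite !mxE.
Qed.

Lemma col_matrixP m n (X Y : 'M[F]_(m, n)) : (forall j, col j X = col j Y) -> X = Y.
Proof. by move=> H; apply/matrixP => i j; have /colP/(_ i) := H j; rewrite !mxE. Qed.

Lemma col_mulmx m n p (X : 'M[F]_(m, n)) (Y : 'M[F]_(n, p)) j :
  col j (X *m Y) = X *m col j Y.
Proof. by rewrite !colE mulmxA. Qed.

Lemma right_eigenvector n (X : 'M[F]_n) t :
  eigenvalue X t -> exists2 z : 'cV_n, X *m z = t *: z & z != 0.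
Proof.
move=> Xt; have : kermx (X - t%:M)^T != 0.
  by rewrite kermx_eq0 row_free_unit unitmx_tr -row_free_unit -kermx_eq0.
case/rowV0Pn => z; rewrite sub_kermx => /eqP hz nz.
exists z^T; last by apply: contra nz => /eqP/(congr1 trmx); rewrite trmxK trmx0 => ->.
have : (X - t%:M) *m z^T = 0 by rewrite -[X - _]trmxK -trmx_mul hz trmx0.
by rewrite mulmxBl mul_scalar_mx => /eqP; rewrite subr_eq0 => /eqP.
Qed.

Lemma unitmx_of_inj n (X : 'M[F]_n) :
  (forall y : 'cV_n, X *m y = 0 -> y = 0) -> X \in unitmx.
Proof.
move=> H; rewrite -unitmx_tr -row_free_unit -kermx_eq0.
apply/negPn/negP => /rowV0Pn [z]; rewrite sub_kermx => /eqP hz nz.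
have /H /(congr1 trmx) : X *m z^T = 0 by rewrite -[X]trmxK -trmx_mul hz trmx0.
by rewrite trmxK trmx0 => z0; rewrite z0 eqxx in nz.
Qed.

Lemma diag_delta n (i : 'I_n) : diag_mx (delta_mx 0 i) = delta_mx i i :> 'M[F]_n.
Proof.
apply/matrixP => k l; rewrite !mxE.
case: (eqVneq k l) => [->|kl]; first by rewrite andbb mulr1n.
by rewrite mulr0n; case: (eqVneq k i) => [ki|] //; rewrite -ki eq_sym (negbTE kl).
Qed.

Lemma delta_mul_delta n (i j : 'I_n) (X : 'M[F]_n) :
  delta_mx i i *m X *m delta_mx j j = X i j *: delta_mx i j.
Proof.
apply/matrixP => k l; rewrite -!diag_delta mul_mx_diag mul_diag_mx !mxE.
by case: (eqVneq k i) => [->|ki]; case: (eqVneq l j) => [->|lj];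
  rewrite ?mulr1 ?mul1r ?mulr0 ?mul0r ?andbF ?andFb.
Qed.

Lemma mxtrace_delta n (i : 'I_n) (X : 'M[F]_n) : \tr (delta_mx i i *m X) = X i i.
Proof.
rewrite -diag_delta /mxtrace (bigD1 i) //= big1 ?addr0.
  by rewrite mul_diag_mx !mxE !eqxx mul1r.
by move=> k /negbTE hk; rewrite mul_diag_mx !mxE hk mul0r.
Qed.

Lemma conj_mx_eq0 n (W X : 'M[F]_n) :
  W \in unitmx -> (W *m X *m invmx W == 0) = (X == 0).
Proof.
move=> Wu; apply/eqP/eqP => [H|->]; last by rewrite mulmx0 mul0mx.
by rewrite -[X](mulKmx Wu) -[W *m X](mulmxKV Wu) H mul0mx mulmx0.
Qed.

Lemma delta_mulmx_col n (i : 'I_n) (y : 'cV[F]_n) :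
  delta_mx i i *m y = y i 0 *: delta_mx i 0.
Proof.
apply/matrixP => k l; rewrite (ord1 l) -diag_delta mul_diag_mx !mxE eqxx andbT.
by case: (eqVneq k i) => [->|]; rewrite ?mulr1 ?mul1r ?mulr0 ?mul0r.
Qed.

Lemma prod_mulmx_eigvec n m (y : 'cV[F]_n.+1) (P : pred 'I_m)
    (f : 'I_m -> 'M[F]_n.+1) (g : 'I_m -> F) :
  (forall j, P j -> f j *m y = g j *: y) ->
  (\prod_(j | P j) f j) *m y = (\prod_(j | P j) g j) *: y.
Proof.
move=> H; apply: (big_rec2 (fun X c => X *m y = c *: y)).
  by rewrite mul1mx scale1r.
by move=> j X c Pj IH; rewrite -mulmxE -mulmxA IH -scalemxAr H // scalerA mulrC.
Qed.

Lemma conj_delta_eq0 n (W X : 'M[F]_n) (i j : 'I_n) : W \in unitmx ->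
  (W *m (delta_mx i i *m X *m delta_mx j j) *m invmx W == 0) = (X i j == 0).
Proof.
move=> Wu; rewrite conj_mx_eq0 // delta_mul_delta scaler_eq0 orbC.
suff -> : (delta_mx i j == 0 :> 'M[F]_n) = false by [].
by apply/eqP => /matrixP/(_ i j)/eqP; rewrite !mxE !eqxx oner_eq0.
Qed.

End MatrixFacts.

Section Diagonalized.
Variables (F : fieldType) (d : nat) (X W : 'M[F]_d.+1) (theta : nat -> F).
Hypothesis theta_inj :
  forall i j, (i <= d)%N -> (j <= d)%N -> theta i = theta j -> i = j.
Hypothesis XW : X *m W = W *m diag_mx (\row_j theta j).

Lemma primIdem_eigvecs i : (i <= d)%N ->
  primIdem X theta i *m W = W *m delta_mx (inord i) (inord i).
Proof.
move=> hi; rewrite -diag_delta; apply/mulmx_eigvec_cols => j.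
have Xj : X *m col j W = theta j *: col j W.
  by have := proj2 (mulmx_eigvec_cols _ _ _) XW j; rewrite mxE.
rewrite /primIdem (@prod_mulmx_eigvec _ _ _ _ _ _
    (fun k : 'I_d.+1 => (theta i - theta k)^-1 * (theta j - theta k))); last first.
  move=> k _; rewrite -scalemxAl mulmxBl Xj mul_scalar_mx -scalerBl scalerA //.
congr (_ *: _); rewrite mxE eqxx /= -val_eqE /= inordK //.
case: (eqVneq (j : nat) i) => [ji | nji].
  rewrite big1 // => k hk; rewrite ji mulVf // subr_eq0; apply: contra hk => /eqP e.
  by rewrite (theta_inj hi _ e) // -ltnS.
by rewrite (bigD1 j) //= subrr mulr0 mul0r.
Qed.

Lemma eigvecs_unitmx : (forall j, col j W != 0) -> W \in unitmx.
Proof.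
move=> Wcol; apply: unitmx_of_inj => y Wy; apply/colP => i; rewrite mxE.
have hi : (i <= d)%N by rewrite -ltnS.
have : primIdem X theta i *m (W *m y) = 0 by rewrite Wy mulmx0.
rewrite mulmxA primIdem_eigvecs // inord_val -mulmxA delta_mulmx_col -scalemxAr -colE.
by move/eqP; rewrite scaler_eq0 (negbTE (Wcol i)) orbF => /eqP.
Qed.

Lemma primIdem_eigenbasis i : W \in unitmx -> (i <= d)%N ->
  primIdem X theta i = W *m delta_mx (inord i) (inord i) *m invmx W.
Proof. by move=> Wu hi; rewrite -primIdem_eigvecs // mulmxK. Qed.

End Diagonalized.

(* Adjacency in Delta and the a^*_i, read in an eigenbasis W of A where
   A^* has matrix N: E_i A^* E_j = W (N_ij delta_ij) W^-1. *)
Section DualInEigenbasis.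
Variables (F : fieldType) (d : nat) (X W N : 'M[F]_d.+1) (theta : nat -> F).
Variables (Es : nat -> 'M[F]_d.+1) (thst : nat -> F).
Hypothesis theta_inj :
  forall i j, (i <= d)%N -> (j <= d)%N -> theta i = theta j -> i = j.
Hypothesis XW : X *m W = W *m diag_mx (\row_j theta j).
Hypothesis W_unit : W \in unitmx.
Hypothesis WN : dualA Es thst *m W = W *m N.

Let dual_eigenbasis : dualA Es thst = W *m N *m invmx W.
Proof. by rewrite -WN mulmxK. Qed.

Lemma DeltaAdj_eigenbasis i j : (i <= d)%N -> (j <= d)%N ->
  DeltaAdj X theta Es thst i j <-> i <> j /\ N (inord i) (inord j) != 0.
Proof.
move=> hi hj; rewrite /DeltaAdj.
have -> : primIdem X theta i *m dualA Es thst *m primIdem X theta j =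
    W *m (delta_mx (inord i) (inord i) *m N *m delta_mx (inord j) (inord j)) *m invmx W.
  rewrite !(primIdem_eigenbasis theta_inj XW) // dual_eigenbasis.
  by rewrite !mulmxA !mulmxKV.
by rewrite -(conj_delta_eq0 _ _ _ W_unit); split=> -[ij /eqP nz].
Qed.

Lemma astar_eigenbasis i : (i <= d)%N ->
  astar X theta Es thst i = N (inord i) (inord i).
Proof.
move=> hi; rewrite /astar (primIdem_eigenbasis theta_inj XW) // dual_eigenbasis.
rewrite !mulmxA mulmxKV // mxtrace_mulC !mulmxA mulVmx // mul1mx.
by rewrite mxtrace_delta.
Qed.

End DualInEigenbasis.

Section ZeroPattern.
Variables (F : fieldType) (n : nat).

Lemma commute_diag_is_diag (G : 'M[F]_n) (e : 'rV[F]_n) :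
  injective (e 0) -> diag_mx e *m G = G *m diag_mx e -> is_diag_mx G.
Proof.
move=> e_inj eG; apply/is_diag_mxP => i j ij.
have /eqP := congr1 (fun X : 'M_n => X i j) eG.
rewrite mul_diag_mx mul_mx_diag !mxE mulrC -subr_eq0 -mulrBr mulf_eq0 subr_eq0.
by case/orP => [/eqP // | /eqP /e_inj ij0]; rewrite ij0 eqxx in ij.
Qed.

(* Let diag(k) (invertible) symmetrize M, i.e. M^T diag(k) = diag(k) M, and let U
   diagonalize M with distinct eigenvalues.  Then any N similar through U to a
   diagonal matrix, diag(t) U = U N, has a symmetric zero pattern: the Gram matrix
   G = U^T diag(k) U is diagonal and invertible, and G N is symmetric. *)
Lemma symmetrizable_zero_pattern (M U N : 'M[F]_n) (k e t : 'rV[F]_n) :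
  injective (e 0) -> (forall i, k 0 i != 0) -> U \in unitmx ->
  M^T *m diag_mx k = diag_mx k *m M -> M *m U = U *m diag_mx e ->
  diag_mx t *m U = U *m N ->
  forall i j, (N i j == 0) = (N j i == 0).
Proof.
move=> e_inj k_neq0 Uu MK MU UN i j.
pose G := U^T *m diag_mx k *m U.
have /diag_mxP [g Gg] : is_diag_mx G.
  apply: (commute_diag_is_diag e_inj).
  have eUt : diag_mx e *m U^T = U^T *m M^T.
    by rewrite -[diag_mx e]tr_diag_mx -trmx_mul -MU trmx_mul.
  by rewrite /G !mulmxA eUt -(mulmxA U^T) MK !mulmxA -(mulmxA _ M) MU !mulmxA.
have g_neq0 l : g 0 l != 0.
  have : G \in unitmx.
    rewrite /G !unitmx_mul unitmx_tr Uu unitmxE det_diag unitfE andbT.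
    by apply/prodf_neq0 => m _.
  by rewrite Gg unitmxE det_diag unitfE => /prodf_neq0; apply.
have GN_sym : (G *m N)^T = G *m N.
  have -> : G *m N = U^T *m diag_mx (\row_l (k 0 l * t 0 l)) *m U.
    by rewrite /G -mulmxA -UN !mulmxA -mulmx_diag mulmxA.
  by rewrite !trmx_mul trmxK tr_diag_mx mulmxA.
have GNe l m : (G *m N) l m = g 0 l * N l m by rewrite Gg mul_diag_mx mxE.
rewrite -(mulrI_eq0 _ (mulfI (g_neq0 i))) -GNe -GN_sym mxE GNe.
exact: mulrI_eq0 (mulfI (g_neq0 j)).
Qed.

End ZeroPattern.

(* The tridiagonal matrix with diagonal a, superdiagonal b and subdiagonal c:
   it is the matrix of A in a feasible basis, read column by column. *)
Section Tridiagonal.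
Variables (F : fieldType) (d : nat) (a b c : nat -> F).

Definition tridiag_entry (i j : nat) : F :=
  (if j == i.+1 then b i else 0) + (if j == i then a i else 0)
  + (if j.+1 == i then c i else 0).

Definition tridiag : 'M[F]_d.+1 := \matrix_(i, j) tridiag_entry i j.

Lemma tridiag_entry_super i : tridiag_entry i i.+1 = b i.
Proof.
rewrite /tridiag_entry eqxx.
have [-> ->] : (i.+1 == i) = false /\ (i.+2 == i) = false by split; lia.
by rewrite !addr0.
Qed.

Lemma tridiag_entry_sub i : tridiag_entry i.+1 i = c i.+1.
Proof.
rewrite /tridiag_entry eqxx.
have [-> ->] : (i == i.+2) = false /\ (i == i.+1) = false by split; lia.
by rewrite !add0r.
Qed.

Lemma tridiag_row (x : 'cV[F]_d.+1) (i : 'I_d.+1) :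
  (tridiag *m x) i 0 =
  (if (i.+1 < d.+1)%N then b i * x (inord i.+1) 0 else 0) + a i * x (inord i) 0
  + (if (i : nat) is i'.+1 then c i * x (inord i') 0 else 0).
Proof.
rewrite mxE.
transitivity (\sum_(k < d.+1)
  ((if (k : nat) == i.+1 then b i * x (inord k) 0 else 0)
   + (if (k : nat) == i then a i * x (inord k) 0 else 0)
   + (if (i : nat) is i'.+1 then
        (if (k : nat) == i' then c i * x (inord k) 0 else 0) else 0))).
  apply: eq_bigr => k _; rewrite mxE /tridiag_entry inord_val !mulrDl.
  case: (nat_of_ord i) => [|i'] /=; last rewrite eqSS;
    by do !case: (_ == _); rewrite ?mul0r.
rewrite !big_split /= (sum_ord_pick _ _ (fun k => b i * x (inord k) 0))
  (sum_ord_pick _ _ (fun k => a i * x (inord k) 0)) ltn_ord.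
case: i => [[|i'] hi] /=; first by rewrite big1.
by rewrite (sum_ord_pick _ _ (fun k => c i'.+1 * x (inord k) 0)) (ltnW hi).
Qed.

Lemma tridiag_col (P : 'M[F]_d.+1) (j : 'I_d.+1) :
  P *m col j tridiag =
  (if (j : nat) is j'.+1 then b j' *: col (inord j') P else 0) + a j *: col (inord j) P
  + (if (j.+1 < d.+1)%N then c j.+1 *: col (inord j.+1) P else 0).
Proof.
have -> : P *m col j tridiag = \sum_k tridiag k j *: col k P.
  by apply/matrixP => i l; rewrite !mxE summxE; apply: eq_bigr => k _; rewrite !mxE mulrC.
transitivity (\sum_(k < d.+1)
  ((if (j : nat) is j'.+1 then
      (if (k : nat) == j' then b k *: col (inord k) P else 0) else 0)
   + (if (k : nat) == j then a k *: col (inord k) P else 0)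
   + (if (k : nat) == j.+1 then c k *: col (inord k) P else 0))).
  apply: eq_bigr => k _; rewrite mxE /tridiag_entry inord_val !scalerDl.
  case: k => /= k hk; case: j => /= [[|j'] hj].
    rewrite (eq_sym 0%N k) (eq_sym 1%N k).
    by case: (k == 0)%N; case: (k == 1)%N; rewrite ?scale0r.
  rewrite eqSS [j' == k]eq_sym [j'.+1 == k]eq_sym [j'.+2 == k]eq_sym.
  by case: (k == j')%N; case: (k == j'.+1)%N; case: (k == j'.+2)%N; rewrite ?scale0r.
rewrite !big_split /= (sum_ord_pick _ _ (fun k => a k *: col (inord k) P))
  (sum_ord_pick _ _ (fun k => c k *: col (inord k) P)) ltn_ord.
case: j => [[|j'] hj] /=; first by rewrite big1.
by rewrite (sum_ord_pick _ _ (fun k => b k *: col (inord k) P)) (ltnW hj).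
Qed.

Lemma upolySS m : upoly a b c m.+2 =
  (b m.+1)^-1 *: (('X - (a m.+1)%:P) * upoly a b c m.+1 - c m.+1 *: upoly a b c m).
Proof. by rewrite /upoly /=; case: (u_aux a b c m). Qed.

Hypothesis b_neq0 : forall i, (i < d)%N -> b i != 0.

Lemma tridiag_eigvec (x : 'cV[F]_d.+1) t : tridiag *m x = t *: x ->
  forall i, (i <= d)%N -> x (inord i) 0 = x (inord 0) 0 * (upoly a b c i).[t].
Proof.
move=> hx.
have rec i : (i <= d)%N ->
    (if (i.+1 < d.+1)%N then b i * x (inord i.+1) 0 else 0) + a i * x (inord i) 0
    + (if i is i'.+1 then c i * x (inord i') 0 else 0) = t * x (inord i) 0.
  by move=> hi; have := congr1 (fun y : 'cV_d.+1 => y (inord i) 0) hx;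
    rewrite tridiag_row !mxE inordK.
suff two_steps m : (m < d)%N ->
    x (inord m) 0 = x (inord 0) 0 * (upoly a b c m).[t] /\
    x (inord m.+1) 0 = x (inord 0) 0 * (upoly a b c m.+1).[t].
  by case=> [|i] hi; [rewrite hornerC mulr1 | case: (two_steps i hi)].
elim: m => [|m IH] hm.
  split; first by rewrite hornerC mulr1.
  have := rec 0%N (leq0n _); rewrite ltnS hm addr0 => e.
  rewrite /upoly /= hornerZ hornerXsubC; apply: (mulfI (b_neq0 hm)).
  rewrite -[b 0%N * _](addrK (a 0%N * x (inord 0) 0)) e; field; exact: b_neq0.
have [IH1 IH2] := IH (ltnW hm); split => //.
have := rec m.+1 (ltnW hm); rewrite ltnS hm => e.
rewrite upolySS hornerZ hornerD hornerN hornerM hornerXsubC hornerZ.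
apply: (mulfI (b_neq0 hm)).
have -> : b m.+1 * x (inord m.+2) 0 =
    t * x (inord m.+1) 0 - a m.+1 * x (inord m.+1) 0 - c m.+1 * x (inord m) 0.
  by rewrite -e; ring.
rewrite IH1 IH2; field; exact: b_neq0.
Qed.

Definition eigvec_mx (theta : nat -> F) : 'M[F]_d.+1 :=
  \matrix_(i, j) (upoly a b c i).[theta j].

Lemma eigvec_mx_col_neq0 theta j : col j (eigvec_mx theta) != 0.
Proof.
apply/eqP => /matrixP/(_ ord0 ord0); rewrite !mxE hornerC.
exact/eqP/oner_neq0.
Qed.

Lemma tridiag_eigvec_mx theta :
  (forall j, (j <= d)%N -> eigenvalue tridiag (theta j)) ->
  tridiag *m eigvec_mx theta = eigvec_mx theta *m diag_mx (\row_j theta j).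
Proof.
move=> eig; apply/mulmx_eigvec_cols => j; rewrite mxE.
have [z hz nz] := right_eigenvector (eig j (ltn_ord j)).
have z_u i : z i 0 = z (inord 0) 0 * (upoly a b c i).[theta j].
  by rewrite -[i in LHS]inord_val (tridiag_eigvec hz) // -ltnS.
have z0 : z (inord 0) 0 != 0.
  by apply: contra nz => /eqP z0; apply/eqP/colP => i; rewrite z_u z0 mul0r mxE.
have -> : col j (eigvec_mx theta) = (z (inord 0) 0)^-1 *: z.
  by apply/colP => i; rewrite !mxE (z_u i) mulKf.
by rewrite -scalemxAr hz scalerA mulrC -scalerA.
Qed.

(* Constant row sum t makes (1, ..., 1) an eigenvector, so u_i(t) = 1. *)
Lemma upoly_rowsum t : c 0%N = 0 -> b d = 0 ->
  (forall i, (i <= d)%N -> c i + a i + b i = t) ->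
  forall i, (i <= d)%N -> (upoly a b c i).[t] = 1.
Proof.
move=> c0 bd rowsum i hi.
suff one_eig : tridiag *m const_mx 1 = t *: (const_mx 1 : 'cV[F]_d.+1).
  by have := tridiag_eigvec one_eig hi; rewrite !mxE mul1r.
apply/colP => k; rewrite tridiag_row !mxE !mulr1 -(rowsum k (ltn_ord k)).
have -> : (if (k.+1 < d.+1)%N then b k else 0) = b k.
  case: ifP => // /negbT; rewrite ltnS -leqNgt => dk.
  by have -> : (k : nat) = d by apply/eqP; rewrite eqn_leq dk -ltnS andbT.
by case: k => [[|k] hk] /=; rewrite ?c0 ?mxE ?mulr1; ring.
Qed.

End Tridiagonal.

Section Symmetrizer.
Variables (F : fieldType) (d : nat) (a b c : nat -> F).
Hypothesis b_neq0 : forall i, (i < d)%N -> b i != 0.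
Hypothesis c_neq0 : forall i, (i < d)%N -> c i.+1 != 0.

(* k_0 = 1, k_(i+1) = k_i b_i / c_(i+1), chosen so that k_(i+1) c_(i+1) = k_i b_i. *)
Fixpoint symmetrizer (i : nat) : F :=
  if i is i'.+1 then symmetrizer i' * b i' / c i else 1.

Lemma symmetrizer_neq0 i : (i <= d)%N -> symmetrizer i != 0.
Proof.
elim: i => [|i IH] hi /=; first exact: oner_neq0.
by rewrite mulf_neq0 ?invr_neq0 ?c_neq0 ?mulf_neq0 ?b_neq0 ?IH // ltnW.
Qed.

Lemma tridiag_entry_sym i j : (i <= d)%N -> (j <= d)%N ->
  tridiag_entry a b c j i * symmetrizer j = symmetrizer i * tridiag_entry a b c i j.
Proof.
move=> hi hj; rewrite /tridiag_entry.
have succ_neq k : [/\ (k == k.+1) = false, (k.+1 == k) = false,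
    (k == k.+2) = false & (k.+2 == k) = false]%N by split; lia.
have [ji | ne1] := eqVneq j i.+1.
  subst j; have hc : c i.+1 != 0 by apply: c_neq0.
  case: (succ_neq i) => e1 e2 e3 e4.
  by rewrite ?e1 ?e2 ?e3 ?e4 ?eqxx /= !add0r !addr0; field.
have [ij | ne2] := eqVneq i j.+1.
  subst i; have hc : c j.+1 != 0 by apply: c_neq0.
  case: (succ_neq j) => e1 e2 e3 e4.
  by rewrite ?e1 ?e2 ?e3 ?e4 ?eqxx /= !add0r !addr0; field.
by rewrite !add0r !addr0 eq_sym; case: eqP => [->|]; rewrite ?mul0r ?mulr0 // mulrC.
Qed.

Lemma tridiag_symmetrizable :
  (tridiag d a b c)^T *m diag_mx (\row_i symmetrizer i) =
  diag_mx (\row_i symmetrizer i) *m tridiag d a b c.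
Proof.
apply/matrixP => i j; rewrite mul_mx_diag mul_diag_mx !mxE.
by apply: tridiag_entry_sym; rewrite -ltnS.
Qed.

End Symmetrizer.

Section ColumnCriterion.
Variables (F : fieldType) (d : nat) (U N : 'M[F]_d.+1) (th : nat -> F) (r s : nat).
Hypotheses (hr : (r <= d)%N) (hs : (s <= d)%N) (hsr : s <> r).
Hypothesis U_unit : U \in unitmx.
Hypothesis U_col_r : forall i, U i (inord r) = 1.
Hypothesis U_row_0 : forall j, U (inord 0) j = 1.
Hypothesis UN_col_r :
  forall i, (i <= d)%N -> th i = \sum_k U (inord i) k * N k (inord r).
Hypothesis N_sym0 : forall i j, (N i j == 0) = (N j i == 0).

Let R : 'I_d.+1 := inord r.
Let S : 'I_d.+1 := inord s.

Let inord_eq x y : (x <= d)%N -> (y <= d)%N -> (inord x == inord y :> 'I_d.+1) = (x == y).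
Proof. by move=> hx hy; rewrite -val_eqE /= !inordK. Qed.

Let R_neq_S : R != S.
Proof. by rewrite inord_eq //; apply/eqP => rs; apply: hsr. Qed.

Lemma dual_col_two_terms : (forall k, k != R -> k != S -> N k R = 0) ->
  forall i, (i <= d)%N -> th i = N R R + U (inord i) S * N S R.
Proof.
move=> N0 i hi; rewrite UN_col_r // (bigD1 R) //= (bigD1 S) /=; last by rewrite eq_sym R_neq_S.
by rewrite big1 ?addr0 ?U_col_r ?mul1r // => k /andP [kR kS]; rewrite N0 ?mulr0.
Qed.

(* Conversely, if column s of U is the affine rescaling of th, then the
   invertibility of U forces column r of N onto {r, s}. *)
Lemma dual_col_support : th 0%N != N R R ->
  (forall i, (i <= d)%N -> U (inord i) S = (th i - N R R) / (th 0%N - N R R)) ->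
  forall k, N k R = (k == R)%:R * N R R + (k == S)%:R * (th 0%N - N R R).
Proof.
move=> th0 Us.
pose z := col R N - N R R *: delta_mx R 0 - (th 0%N - N R R) *: delta_mx S 0.
have Uz : U *m z = 0.
  apply/colP => i; rewrite !mulmxBr -!scalemxAr -!colE !mxE U_col_r.
  have := UN_col_r (ltn_ord i); have := Us _ (ltn_ord i); rewrite !inord_val => -> ->.
  rewrite (eq_bigr (fun k => U i k * N k R)) => [|k _]; last by rewrite !mxE.
  by field; rewrite subr_eq0.
have /colP z0 : z = 0 by rewrite -[z](mulKmx U_unit) Uz mulmx0.
move=> k; have /eqP := z0 k; rewrite !mxE !andbT subr_eq0 subr_eq => /eqP ->.
by ring.
Qed.

Lemma column_criterion :
  (forall j, (j <= d)%N -> (r <> j /\ N R (inord j) != 0) <-> j = s) <->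
  (N R R <> th 0%N /\
   forall i, (i <= d)%N -> U (inord i) S = (th i - N R R) / (th 0%N - N R R)).
Proof.
split=> [adj | [th0 Us] j hj].
  have N0 k : k != R -> k != S -> N k R = 0.
    move=> kR kS; apply/eqP; rewrite N_sym0; apply: contraR kS => nz.
    have hk : (k <= d)%N by rewrite -ltnS.
    rewrite -[k]inord_val inord_eq //; apply/eqP/(adj k hk).
    split; last by rewrite inord_val.
    by move=> rk; rewrite /R rk inord_val eqxx in kR.
  have NSR : N S R != 0 by rewrite N_sym0; case: (proj2 (adj s hs) erefl).
  have th0 := dual_col_two_terms N0 (leq0n d); rewrite U_row_0 mul1r in th0.
  have NSR_eq : N S R = th 0%N - N R R by rewrite th0; ring.
  split=> [e | i hi].
    by move: NSR; rewrite NSR_eq e subrr eqxx.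
  by rewrite (dual_col_two_terms N0 hi) -NSR_eq; field.
have th0' : th 0%N != N R R by apply/eqP => e; apply: th0.
rewrite -N_sym0 (dual_col_support th0' Us) !inord_eq //.
case: (eqVneq j s) => [-> | js].
  rewrite (introF eqP hsr) /= mulr0n mulr1n mul0r add0r mul1r subr_eq0 th0'.
  by split=> // _; split=> // rs; apply: hsr.
rewrite /= mulr0n mul0r addr0; split=> [[rj] | js_eq]; last by rewrite js_eq eqxx in js.
by case: (eqVneq j r) => [jr | _]; [case: rj | rewrite /= mulr0n mul0r eqxx].
Qed.

End ColumnCriterion.

Section TridiagonalModel.
Variables (F : fieldType) (d : nat) (a b c theta thst : nat -> F) (r : nat).
Hypothesis b_neq0 : forall i, (i < d)%N -> b i != 0.
Hypothesis c_neq0 : forall i, (i < d)%N -> c i.+1 != 0.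
Hypothesis theta_inj :
  forall i j, (i <= d)%N -> (j <= d)%N -> theta i = theta j -> i = j.
Hypothesis theta_eig : forall j, (j <= d)%N -> eigenvalue (tridiag d a b c) (theta j).
Hypotheses (c_0 : c 0%N = 0) (b_d : b d = 0) (hr : (r <= d)%N).
Hypothesis rowsum : forall i, (i <= d)%N -> c i + a i + b i = theta r.

Let U := eigvec_mx d a b c theta.
Let N := invmx U *m diag_mx (\row_j thst j) *m U.

Lemma eigvec_mx_diag : tridiag d a b c *m U = U *m diag_mx (\row_j theta j).
Proof. exact: tridiag_eigvec_mx. Qed.

Lemma eigvec_mx_unit : U \in unitmx.
Proof. exact: eigvecs_unitmx theta_inj eigvec_mx_diag (eigvec_mx_col_neq0 a b c theta). Qed.

Lemma dual_eigvec_mx : diag_mx (\row_j thst j) *m U = U *m N.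
Proof. by rewrite /N !mulmxA mulmxV ?eigvec_mx_unit // mul1mx. Qed.

(* Column r of U is all ones, since u_i(theta_r) = 1. *)
Lemma eigvec_mx_col_r i : U i (inord r) = 1.
Proof. by rewrite mxE inordK // (upoly_rowsum b_neq0 c_0 b_d rowsum) // -ltnS. Qed.

Lemma eigvec_mx_row_0 j : U (inord 0) j = 1.
Proof. by rewrite mxE inordK // hornerC. Qed.

Lemma dual_col_r i : (i <= d)%N -> thst i = \sum_k U (inord i) k * N k (inord r).
Proof.
move=> hi; have := congr1 (fun X : 'M_d.+1 => X (inord i) (inord r)) dual_eigvec_mx.
by rewrite mul_diag_mx !mxE !inordK // (upoly_rowsum b_neq0 c_0 b_d rowsum) // mulr1.
Qed.

Lemma dual_zero_pattern i j : (N i j == 0) = (N j i == 0).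
Proof.
apply: (symmetrizable_zero_pattern _ _ eigvec_mx_unit
  (tridiag_symmetrizable a b c_neq0) eigvec_mx_diag dual_eigvec_mx).
  by move=> k l; rewrite !mxE => /theta_inj kl; apply/val_inj/kl; rewrite -ltnS.
by move=> k; rewrite mxE (symmetrizer_neq0 b_neq0 c_neq0) // -ltnS.
Qed.

(* Proposition 8.3 in the tridiagonal model, with N_rj in place of the
   adjacency r ~ j and N_rr in place of a^*_r. *)
Lemma tridiag_criterion s : (s <= d)%N -> s <> r ->
  (forall j, (j <= d)%N -> (r <> j /\ N (inord r) (inord j) != 0) <-> j = s) <->
  (N (inord r) (inord r) <> thst 0%N /\
   forall i, (i <= d)%N -> (upoly a b c i).[theta s] =
     (thst i - N (inord r) (inord r)) / (thst 0%N - N (inord r) (inord r))).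
Proof.
move=> hs hsr; apply: iff_trans (column_criterion hr hs hsr eigvec_mx_unit
  eigvec_mx_col_r eigvec_mx_row_0 dual_col_r dual_zero_pattern) _.
split=> -[h1 h2]; split=> // i hi; last by rewrite mxE !inordK // h2.
by rewrite -h2 // mxE !inordK.
Qed.

End TridiagonalModel.

Section FeasibleBasis.
Variables (F : fieldType) (d : nat) (Es : nat -> 'M[F]_d.+1) (A : 'M[F]_d.+1).
Variables (thst : nat -> F) (v : nat -> 'cV[F]_d.+1) (a b c : nat -> F).
Hypothesis hEs : forall i j, (i <= d)%N -> (j <= d)%N ->
  Es i *m Es j = if i == j then Es i else 0.
Hypothesis hv_feas : forall i, (i <= d)%N -> exists w : 'cV[F]_d.+1, v i = Es i *m w.
Hypothesis hAv : forall i, (i <= d)%N ->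
  A *m v i = (if i is k.+1 then b k *: v k else 0) + a i *: v i
             + (if (i < d)%N then c i.+1 *: v i.+1 else 0).

Definition basis_mx : 'M[F]_d.+1 := \matrix_(k, j) v j k ord0.

Lemma basis_col j : col j basis_mx = v j.
Proof. by apply/colP => k; rewrite !mxE. Qed.

Lemma basis_col_inord m : (m <= d)%N -> col (inord m) basis_mx = v m.
Proof. by move=> hm; rewrite basis_col inordK. Qed.

Lemma Es_basis_vec i j : (i <= d)%N -> (j <= d)%N ->
  Es i *m v j = if i == j then v j else 0.
Proof.
move=> hi hj; have [w ->] := hv_feas hj; rewrite mulmxA hEs //.
by case: eqP => [->|]; rewrite ?mul0mx.
Qed.

Lemma Es_basis i : (i <= d)%N ->
  Es i *m basis_mx = basis_mx *m delta_mx (inord i) (inord i).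
Proof.
move=> hi; rewrite -diag_delta; apply/mulmx_eigvec_cols => j.
have hj : (j <= d)%N by rewrite -ltnS.
rewrite basis_col Es_basis_vec // !mxE eqxx -val_eqE /= inordK // eq_sym.
by case: eqP; rewrite ?scale1r ?scale0r.
Qed.

Lemma A_basis : A *m basis_mx = basis_mx *m tridiag d a b c.
Proof.
apply: col_matrixP => j; have hj : (j <= d)%N by rewrite -ltnS.
rewrite !col_mulmx tridiag_col basis_col hAv //; congr (_ + _ + _).
- by case: j hj => [[|k] hk] //= _; rewrite basis_col_inord // ltnW.
- by rewrite basis_col_inord.
- by rewrite ltnS; case: ifP => // jd; rewrite basis_col_inord.
Qed.

Lemma dualA_basis : dualA Es thst *m basis_mx = basis_mx *m diag_mx (\row_j thst j).
Proof.
apply/mulmx_eigvec_cols => j; rewrite basis_col /dualA mulmx_suml mxE.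
have hj : (j <= d)%N by rewrite -ltnS.
under eq_bigr => i _ do rewrite -scalemxAl (Es_basis_vec (ltn_ord i) hj).
rewrite (eq_bigr (fun i : 'I_d.+1 => if (i : nat) == j then thst i *: v j else 0)).
  by rewrite (sum_ord_pick _ _ (fun i => thst i *: v j)) ltn_ord.
by move=> i _; case: eqP; rewrite ?scaler0.
Qed.

Hypothesis basis_unit : basis_mx \in unitmx.

Lemma feasible_block_eq0 i j : (i <= d)%N -> (j <= d)%N ->
  (Es i *m A *m Es j == 0) = (tridiag_entry a b c i j == 0).
Proof.
move=> hi hj; set P := basis_mx.
have EsP k : (k <= d)%N -> Es k = P *m delta_mx (inord k) (inord k) *m invmx P.
  by move=> hk; rewrite -Es_basis // mulmxK.
have AP : A = P *m tridiag d a b c *m invmx P by rewrite -A_basis mulmxK.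
have -> : Es i *m A *m Es j = P *m (delta_mx (inord i) (inord i) *m tridiag d a b c
    *m delta_mx (inord j) (inord j)) *m invmx P.
  by rewrite AP !EsP // !mulmxA !mulmxKV.
by rewrite conj_delta_eq0 // mxE !inordK.
Qed.

Hypothesis hA1 : forall i j, (i <= d)%N -> (j <= d)%N -> `|i%:Z - j%:Z|%N = 1%N ->
  Es i *m A *m Es j != 0.

Lemma feasible_super_neq0 i : (i < d)%N -> b i != 0.
Proof.
move=> hi; have := hA1 (ltnW hi) hi (distnS i).
by rewrite feasible_block_eq0 ?tridiag_entry_super // ltnW.
Qed.

Lemma feasible_sub_neq0 i : (i < d)%N -> c i.+1 != 0.
Proof.
move=> hi; have := hA1 hi (ltnW hi) (distSn i).
by rewrite feasible_block_eq0 ?tridiag_entry_sub // ltnW.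
Qed.

Lemma eigenvalue_basis t : eigenvalue A t -> eigenvalue (tridiag d a b c) t.
Proof.
case/eigenvalueP => w wA nz; apply/eigenvalueP; exists (w *m basis_mx).
  by rewrite -mulmxA -A_basis mulmxA wA scalemxAl.
by rewrite mulmx_free_eq0 // row_free_unit.
Qed.

End FeasibleBasis.

Theorem proposition8p3 (F : fieldType) (d : nat) (hd : (1 <= d)%N)
  (Es : nat -> 'M[F]_d.+1) (A : 'M[F]_d.+1) (theta thst : nat -> F)
  (v : nat -> 'cV[F]_d.+1) (a b c : nat -> F) (r s : nat)
  (* E^*_i E^*_j = delta_{ij} E^*_i, rank E^*_i = 1 *)
  (hEs : forall i j, (i <= d)%N -> (j <= d)%N ->
           Es i *m Es j = if i == j then Es i else 0)
  (hrk : forall i, (i <= d)%N -> \rank (Es i) = 1%N)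
  (* tridiagonality of A w.r.t. the E^*_i *)
  (hA0 : forall i j, (i <= d)%N -> (j <= d)%N -> (1 < `|i%:Z - j%:Z|)%N ->
           Es i *m A *m Es j = 0)
  (hA1 : forall i j, (i <= d)%N -> (j <= d)%N -> `|i%:Z - j%:Z|%N = 1%N ->
           Es i *m A *m Es j != 0)
  (* d+1 distinct eigenvalues theta_0..theta_d *)
  (htheta_eig : forall i, (i <= d)%N -> eigenvalue A (theta i))
  (htheta_inj : forall i j, (i <= d)%N -> (j <= d)%N -> theta i = theta j -> i = j)
  (* feasible basis v_0..v_d *)
  (hv_basis : (\matrix_(k < d.+1, j < d.+1) v j k ord0) \in unitmx)
  (hv_feas : forall i, (i <= d)%N -> exists w : 'cV[F]_d.+1, v i = Es i *m w)
  (* action of A on the feasible basis; b_d = c_0 = 0 *)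
  (hAv : forall i, (i <= d)%N ->
           A *m v i = (if i is k.+1 then b k *: v k else 0) + a i *: v i
                      + (if (i < d)%N then c i.+1 *: v i.+1 else 0))
  (hb_d : b d = 0) (hc_0 : c 0%N = 0)
  (* constant row sum theta_r *)
  (hr : (r <= d)%N)
  (hrow : forall i, (i <= d)%N -> c i + a i + b i = theta r)
  (hs : (s <= d)%N) (hsr : s <> r) :
  (forall j, (j <= d)%N -> (DeltaAdj A theta Es thst r j <-> j = s))
  <->
  (astar A theta Es thst r <> thst 0%N /\
   forall i, (i <= d)%N ->
     (upoly a b c i).[theta s] =
       (thst i - astar A theta Es thst r) / (thst 0%N - astar A theta Es thst r)).
Proof.
have b_neq0 := feasible_super_neq0 hEs hv_feas hAv hv_basis hA1.
have c_neq0 := feasible_sub_neq0 hEs hv_feas hAv hv_basis hA1.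
have M_eig j (hj : (j <= d)%N) := eigenvalue_basis hAv hv_basis (htheta_eig j hj).
pose U := eigvec_mx d a b c theta; pose N := invmx U *m diag_mx (\row_j thst j) *m U.
pose W := basis_mx v *m U.
have AW : A *m W = W *m diag_mx (\row_j theta j).
  by rewrite mulmxA (A_basis hAv) -mulmxA (eigvec_mx_diag b_neq0 M_eig) mulmxA.
have WN : dualA Es thst *m W = W *m N.
  by rewrite mulmxA (dualA_basis thst hEs hv_feas) -!mulmxA dual_eigvec_mx.
have W_unit : W \in unitmx.
  by rewrite unitmx_mul hv_basis (eigvec_mx_unit b_neq0 htheta_inj M_eig).
rewrite (astar_eigenbasis htheta_inj AW W_unit WN hr).
apply: iff_trans _ (tridiag_criterion thst b_neq0 c_neq0 htheta_inj M_eig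
  hc_0 hb_d hr hrow hs hsr).
split=> H j hj; have := H j hj;
  have := DeltaAdj_eigenbasis htheta_inj AW W_unit WN hr hj; tauto.
Qed.
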